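(* Let $\mathbf{L}'=(L;\vee,\wedge,{}',0,1)$ be an ortholattice with lattice reduct $\mathbf{L}$ and dual $\mathcal{D}(\mathbf{L}')=(P_{\mathbf{L}},E,\mathscr{T}_{\mathbf{L}},g)$. For $a\in L$ let $e_a$ be the partial map on $P_{\mathbf{L}}$ with $e_a(f)=f(a)$ if $a\in\mathrm{dom}f$ and undefined otherwise. Then $a\mapsto e_a$ is an ortholattice isomorphism from $\mathbf{L}'$ onto $\mathcal{E}(\mathcal{D}(\mathbf{L}'))=(\mathrm{MPM}(\mathcal{D}(\mathbf{L}')),\wedge,\vee,\varphi_0,\varphi_1,\neg)$; in particular $e_{a'}=\neg e_a$ for all $a\in L$, and $\mathbf{L}'\cong\mathcal{E}(\mathcal{D}(\mathbf{L}'))$.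
   Context: An ortholattice is a bounded lattice with an operation $'$ satisfying $a''=a$, $a\wedge a'=0$, $a\vee a'=1$ and the De Morgan laws. A partial homomorphism $\mathbf{L}\to\mathbf{2}$ is a partial map $f:L\to\{0,1\}$ whose domain is a $(0,1)$-sublattice and whose restriction is a $(0,1)$-homomorphism; an MPH is one with no proper extension; $P_{\mathbf{L}}$ is the set of MPHs. $(f,h)\in E$ iff $f(a)\le h(a)$ for all $a\in\mathrm{dom}f\cap\mathrm{dom}h$. $\mathscr{T}_{\mathbf{L}}$ has subbasis of closed sets $V_a=\{f: f(a)=0\}$, $W_a=\{f: f(a)=1\}$. $g(f)(a)=0$ if $f(a')=1$, $g(f)(a)=1$ if $f(a')=0$, undefined otherwise. A partial morphism from $(X,E,\mathscr{T})$ to $\underset{\sim}{2}_{\mathscr{T}}$ ($\{0,1\}$ with $\le$ and discrete topology) is a partial map $\varphi:X\to\{0,1\}$ with closed domain, with $\varphi(x)\le\varphi(y)$ whenever $x,y\in\mathrm{dom}\varphi$, $(x,y)\in E$, continuous on its domain; an MPM is one with no proper extension; $\mathrm{MPM}(\cdot)$ denotes the set of MPMs, ordered by $\varphi\le\psi$ iff $\varphi^{-1}(1)\subseteq\psi^{-1}(1)$, which makes it a bounded lattice with meet $\wedge$, join $\vee$, bounds $\varphi_0,\varphi_1$. For an MPM $\varphi$ of $(X,E,\mathscr{T},g)$, $\neg\varphi$ is the partial map with $(\neg\varphi)(x)=1$ if $\varphi(g(x))=0$, $(\neg\varphi)(x)=0$ if $\varphi(g(x))=1$, undefined otherwise. 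*)

From HB Require Import structures.
From mathcomp Require Import all_boot all_order.
Set Implicit Arguments. Unset Strict Implicit. Unset Printing Implicit Defensive.
Import Order.LTheory.
Local Open Scope order_scope.

Record orthocompl (d : Order.disp_t) (L : tbLatticeType d) := OrthoCompl {
  ocompl : L -> L;
  ocomplK : forall a, ocompl (ocompl a) = a;
  ocompl_meet : forall a, a `&` ocompl a = \bot;
  ocompl_join : forall a, a `|` ocompl a = \top;
  ocompl_dm_meet : forall a b, ocompl (a `&` b) = ocompl a `|` ocompl b;
  ocompl_dm_join : forall a b, ocompl (a `|` b) = ocompl a `&` ocompl b }.

(* partial maps T -> {0,1} are T -> option bool (None = undefined) *)
Definition pext (T : Type) (f h : T -> option bool) :=
  forall t x, f t = Some x -> h t = Some x.

Definition is_ph d (L : tbLatticeType d) (f : L -> option bool) :=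
  f \bot = Some false /\ f \top = Some true /\
  forall a b x y, f a = Some x -> f b = Some y ->
    f (a `&` b) = Some (x && y) /\ f (a `|` b) = Some (x || y).

Definition is_mph d (L : tbLatticeType d) (f : L -> option bool) :=
  is_ph f /\ forall h, is_ph h -> pext f h -> pext h f.

Definition PL d (L : tbLatticeType d) := {f : L -> option bool | is_mph f}.

Definition Erel d (L : tbLatticeType d) (f h : PL L) : Prop :=
  forall a x y, sval f a = Some x -> sval h a = Some y -> x ==> y.

(* closed sets of the topology generated by a subbasis S of closed sets:
   the smallest family containing S and closed under finite unions (incl. the
   empty one) and arbitrary intersections (incl. the empty one); it is taken
   extensional. *)
Definition gen_closed (X : Type) (S : (X -> Prop) -> Prop) (C : X -> Prop) :=
  forall F : (X -> Prop) -> Prop,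
    (forall A B, (forall x, A x <-> B x) -> F A -> F B) ->
    (forall A, S A -> F A) ->
    F (fun _ => False) ->
    (forall A B, F A -> F B -> F (fun x => A x \/ B x)) ->
    (forall G : (X -> Prop) -> Prop, (forall A, G A -> F A) ->
        F (fun x => forall A, G A -> A x)) ->
    F C.

Definition VL d (L : tbLatticeType d) (a : L) : PL L -> Prop :=
  fun f => sval f a = Some false.
Definition WL d (L : tbLatticeType d) (a : L) : PL L -> Prop :=
  fun f => sval f a = Some true.

Definition subbasisL d (L : tbLatticeType d) (A : PL L -> Prop) : Prop :=
  exists a : L, A = VL a \/ A = WL a.

Definition closedL d (L : tbLatticeType d) : (PL L -> Prop) -> Prop :=
  gen_closed (@subbasisL d L).

Definition gmap d (L : tbLatticeType d) (o : orthocompl L)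
  (f : L -> option bool) : L -> option bool :=
  fun a => omap negb (f (ocompl o a)).

Section GLemmas.
Variables (d : Order.disp_t) (L : tbLatticeType d) (o : orthocompl L).
Local Notation c := (ocompl o).

Lemma ocompl0 : c \bot = \top.
Proof. by rewrite -(join0x (c \bot)) ocompl_join. Qed.
Lemma ocompl1 : c \top = \bot.
Proof. by rewrite -(meet1x (c \top)) ocompl_meet. Qed.

Lemma gmapK f a : gmap o (gmap o f) a = f a.
Proof. by rewrite /gmap ocomplK; case: (f a) => //= b; rewrite negbK. Qed.

Lemma gmap_Some f a x : gmap o f a = Some x <-> f (c a) = Some (~~ x).
Proof.
rewrite /gmap; case: (f (c a)) => [b|] //=; split => [[<-]|[->]];
  by rewrite ?negbK.
Qed.

Lemma gmap_ph f : is_ph f -> is_ph (gmap o f).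
Proof.
move=> [f0 [f1 fab]]; split; first by rewrite /gmap ocompl0 f1.
split; first by rewrite /gmap ocompl1 f0.
move=> a b x y /gmap_Some ha /gmap_Some hb.
have [hm hj] := fab _ _ _ _ ha hb.
split; apply/gmap_Some.
  by rewrite ocompl_dm_meet hj negb_and.
by rewrite ocompl_dm_join hm negb_or.
Qed.

Lemma gmap_ext f h : pext f h -> pext (gmap o f) (gmap o h).
Proof. by move=> fh a x /gmap_Some /fh /gmap_Some. Qed.

Lemma gmap_mph f : is_mph f -> is_mph (gmap o f).
Proof.
move=> [phf maxf]; split; first exact: gmap_ph.
move=> h phh fh.
have e1 : pext f (gmap o h).
  move=> a x fa; apply: (gmap_ext fh); by rewrite gmapK.
have e2 := maxf _ (gmap_ph phh) e1.
move=> a x ha; have := gmap_ext e2 (x := x) (t := a).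
by rewrite gmapK; apply.
Qed.
End GLemmas.

Definition gL d (L : tbLatticeType d) (o : orthocompl L) (f : PL L) : PL L :=
  exist _ (gmap o (sval f)) (gmap_mph o (svalP f)).

(* partial morphisms from (X, E, closed sets cl) to 2_T (discrete, with <=):
   closed domain, order preserving on the domain, continuous on the domain
   (every preimage of a subset of {0,1} is open in the subspace dom phi) *)
Definition is_pm (X : Type) (E : X -> X -> Prop) (cl : (X -> Prop) -> Prop)
  (phi : X -> option bool) :=
  cl (fun x => phi x <> None) /\
  (forall x y u v, E x y -> phi x = Some u -> phi y = Some v -> u ==> v) /\
  (forall U : bool -> Prop, exists K : X -> Prop, cl K /\
     forall x, phi x <> None ->
       ((exists b, phi x = Some b /\ U b) <-> ~ K x)).

Definition is_mpm (X : Type) (E : X -> X -> Prop) (cl : (X -> Prop) -> Prop)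
  (phi : X -> option bool) :=
  is_pm E cl phi /\ forall psi, is_pm E cl psi -> pext phi psi -> pext psi phi.

Definition mpm_le (X : Type) (phi psi : X -> option bool) :=
  forall x, phi x = Some true -> psi x = Some true.

Definition is_glb (X : Type) (M : (X -> option bool) -> Prop)
  (phi psi chi : X -> option bool) :=
  M chi /\ mpm_le chi phi /\ mpm_le chi psi /\
  forall th, M th -> mpm_le th phi -> mpm_le th psi -> mpm_le th chi.
Definition is_lub (X : Type) (M : (X -> option bool) -> Prop)
  (phi psi chi : X -> option bool) :=
  M chi /\ mpm_le phi chi /\ mpm_le psi chi /\
  forall th, M th -> mpm_le phi th -> mpm_le psi th -> mpm_le chi th.

Definition pneg (X : Type) (g : X -> X) (phi : X -> option bool) : X -> option bool :=
  fun x => omap negb (phi (g x)).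

Definition eL d (L : tbLatticeType d) (a : L) : PL L -> option bool :=
  fun f => sval f a.

(* Maximal partial homomorphisms L -> 2 are exactly the characteristic maps of
   maximal disjoint filter-ideal pairs of L, so by Zorn every disjoint
   filter-ideal pair extends to one; in particular a <= b fails iff some MPH
   sends a to 1 and b to 0, which makes a |-> e_a an order embedding into the
   MPMs.  A closed set of the dual space is an intersection of finite unions
   of subbasic sets V_a, W_a, and a second Zorn argument over filter-ideal
   pairs gives the compactness of such sets.  For an MPM phi, compactness of
   phi^-1(1) and phi^-1(0), together with the absence of E-edges from the
   first to the second, produces an a that is sent to 1 by every member of
   phi^-1(1) and to 0 by every member of phi^-1(0); hence phi extends e_a,
   and maximality gives phi = e_a.  Meets, joins and bounds of the MPMs are
   then those of L, and e_a' = ~e_a is a direct computation. *)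

From mathcomp Require Import all_boot all_order.
From mathcomp Require Import boolp classical_sets.
Set Implicit Arguments. Unset Strict Implicit. Unset Printing Implicit Defensive.
Import Order.LTheory.
Local Open Scope classical_set_scope.
Local Open Scope order_scope.

Section PairZorn.
Variable T : Type.

Definition pair_sub (p q : set T * set T) := p.1 `<=` q.1 /\ p.2 `<=` q.2.

Definition pair_bigcup (F : set (set T * set T)) : set T * set T :=
  (\bigcup_(p in F) p.1, \bigcup_(p in F) p.2).

Lemma pair_sub_refl p : pair_sub p p.
Proof. by split. Qed.

Lemma pair_sub_trans p q r : pair_sub p q -> pair_sub q r -> pair_sub p r.
Proof.
by move=> [pq1 pq2] [qr1 qr2]; split; [apply: subset_trans qr1 | apply: subset_trans qr2].
Qed.

Lemma pair_sub_bigcup F p : F p -> pair_sub p (pair_bigcup F).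
Proof. by move=> Fp; split; apply: bigcup_sup. Qed.

Lemma pair_sub_anti p q : pair_sub p q -> pair_sub q p -> p = q.
Proof.
by case: p q => [P N] [P' N'] [/= PP' NN'] [/= P'P N'N]; congr pair; apply/seteqP.
Qed.

Lemma pair_bigcup_mem F s t : total_on F pair_sub ->
  (pair_bigcup F).1 s -> (pair_bigcup F).2 t -> exists2 p, F p & p.1 s /\ p.2 t.
Proof.
move=> Ftot [p Fp ps] [q Fq qt].
have [[pq1 _]|[_ qp2]] := Ftot p q Fp Fq.
  by exists q => //; split=> //; exact: pq1.
by exists p => //; split=> //; exact: qp2.
Qed.

Lemma Zorn_pair (Q : set (set T * set T)) (p0 : set T * set T) :
  Q p0 ->
  (forall F, F `<=` Q -> F !=set0 -> total_on F pair_sub -> Q (pair_bigcup F)) ->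
  exists2 p, Q p /\ pair_sub p0 p & forall q, Q q -> pair_sub p q -> pair_sub q p.
Proof.
move=> Qp0 Qchain; pose U := {p | Q p /\ pair_sub p0 p}.
have [| | |[p [Qp p0p]] pmax] :=
    @ZL_preorder U (exist _ p0 (conj Qp0 (pair_sub_refl p0)))
      (fun u v => `[< pair_sub (sval u) (sval v) >]).
- by move=> u; apply/asboolP/pair_sub_refl.
- by move=> u v w /asboolP uv /asboolP vw; apply/asboolP/(pair_sub_trans uv).
- move=> A Atot; pose F := setU [set p0] (sval @` A).
  have p0F p : F p -> pair_sub p0 p.
    by case=> [->|[[q [_ p0q]] _ <-]] //; apply: pair_sub_refl.
  have Ftot : total_on F pair_sub.
    move=> p q Fp Fq; case: (Fp) => [->|]; first by left; apply: p0F.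
    case: Fq => [-> _|[v Av <-] [u Au <-]]; first by right; apply: p0F.
    by have [/asboolP|/asboolP] := Atot u v Au Av; [left|right].
  have QF : Q (pair_bigcup F).
    apply: Qchain => //; last by exists p0; left.
    by move=> p [->|[[q [Qq ?]] _ <-]].
  have p0F' : pair_sub p0 (pair_bigcup F) by apply: pair_sub_bigcup; left.
  exists (exist (fun p => Q p /\ pair_sub p0 p) _ (conj QF p0F')) => u Au.
  by apply/asboolP/pair_sub_bigcup; right; exists u.
- exists p => // q Qq pq.
  have p0q := pair_sub_trans p0p pq.
  by have /asboolP := pmax (exist _ q (conj Qq p0q)) (asboolT pq).
Qed.
End PairZorn.

Arguments pair_sub {T} p q.

Definition lat_filter d (L : tbLatticeType d) (P : set L) :=
  [/\ P \top, forall x y, P x -> P y -> P (x `&` y)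
    & forall x y, P x -> x <= y -> P y].

Definition lat_ideal d (L : tbLatticeType d) (N : set L) :=
  [/\ N \bot, forall x y, N x -> N y -> N (x `|` y)
    & forall x y, N x -> y <= x -> N y].

Definition upclosure d (L : tbLatticeType d) (S : set L) : set L :=
  fun y => exists2 x, S x & x <= y.

Definition filter_adjoin d (L : tbLatticeType d) (P : set L) (a : L) : set L :=
  upclosure (fun z => exists2 x, P x & z = x `&` a).

Section Filters.
Variables (d : Order.disp_t) (L : tbLatticeType d).
Implicit Types (P S : set L) (a : L).

Lemma lat_filter_up a : lat_filter (fun y => a <= y).
Proof.
split=> [|x y ax ay|x y ax xy]; first exact: lex1.
  by rewrite lexI ax ay.
exact: le_trans xy.
Qed.

Lemma lat_filter_upclosure S :
  S !=set0 -> (forall x y, S x -> S y -> S (x `&` y)) -> lat_filter (upclosure S).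
Proof.
move=> [z0 Sz0] SI; split=> [|x y [x' Sx' x'x] [y' Sy' y'y]|x y [z Sz zx] xy].
- by exists z0 => //; exact: lex1.
- by exists (x' `&` y'); [exact: SI | exact: leI2].
- by exists z => //; exact: le_trans xy.
Qed.

Lemma lat_filter_adjoin P a :
  lat_filter P -> [/\ lat_filter (filter_adjoin P a), P `<=` filter_adjoin P a
                    & filter_adjoin P a a].
Proof.
move=> [P1 PI _]; split.
- apply: lat_filter_upclosure; first by exists (\top `&` a), \top.
  move=> _ _ [x Px ->] [y Py ->]; exists (x `&` y); first exact: PI Px Py.
  by rewrite meetACA meetxx.
- by move=> x Px; exists (x `&` a); [exists x | exact: leIl].
- by exists (\top `&` a); [exists \top | rewrite meet1x].
Qed.

Lemma lat_filter_bigcup (I : Type) (F : set I) (P : I -> set L) :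
  F !=set0 -> (forall i, F i -> lat_filter (P i)) ->
  (forall i j, F i -> F j -> P i `<=` P j \/ P j `<=` P i) ->
  lat_filter (\bigcup_(i in F) P i).
Proof.
move=> [i0 Fi0] filterP chainP.
split=> [|x y [i Fi Pix] [j Fj Pjy]|x y [i Fi Pix] xy].
- by exists i0 => //; case: (filterP i0 Fi0).
- have [ij|ji] := chainP i j Fi Fj.
    by exists j => //; case: (filterP j Fj) => _ PI _; apply: PI => //; exact: ij.
  by exists i => //; case: (filterP i Fi) => _ PI _; apply: PI => //; exact: ji.
- by exists i => //; case: (filterP i Fi) => _ _ PU; exact: PU Pix xy.
Qed.

Lemma lat_filter_bigcap (I : Type) (F : set I) (P : I -> set L) :
  (forall i, F i -> lat_filter (P i)) -> lat_filter (fun x => forall i, F i -> P i x).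
Proof.
move=> filterP.
split=> [i Fi|x y Px Py i Fi|x y Px xy i Fi]; have [P1 PI PU] := filterP i Fi.
- exact: P1.
- exact: PI (Px i Fi) (Py i Fi).
- exact: PU (Px i Fi) xy.
Qed.

End Filters.

(* [lat_ideal N] is convertible to [lat_filter (N : set L^d)], so each fact on
   ideals below is the corresponding fact on filters in the dual lattice. *)
Section Ideals.
Variables (d : Order.disp_t) (L : tbLatticeType d).
Implicit Types (N S : set L) (a : L).

Definition downclosure (S : set L) : set L := @upclosure _ L^d S.
Definition ideal_adjoin (N : set L) (a : L) : set L := @filter_adjoin _ L^d N a.

Lemma lat_ideal_down a : lat_ideal (fun y => y <= a).
Proof. exact: (@lat_filter_up _ L^d). Qed.

Lemma lat_ideal_downclosure S :
  S !=set0 -> (forall x y, S x -> S y -> S (x `|` y)) -> lat_ideal (downclosure S).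
Proof. exact: (@lat_filter_upclosure _ L^d). Qed.

Lemma lat_ideal_adjoin N a :
  lat_ideal N -> [/\ lat_ideal (ideal_adjoin N a), N `<=` ideal_adjoin N a
                   & ideal_adjoin N a a].
Proof. exact: (@lat_filter_adjoin _ L^d). Qed.

Lemma lat_ideal_bigcup (I : Type) (F : set I) (N : I -> set L) :
  F !=set0 -> (forall i, F i -> lat_ideal (N i)) ->
  (forall i j, F i -> F j -> N i `<=` N j \/ N j `<=` N i) ->
  lat_ideal (\bigcup_(i in F) N i).
Proof. exact: (@lat_filter_bigcup _ L^d). Qed.

Lemma lat_ideal_bigcap (I : Type) (F : set I) (N : I -> set L) :
  (forall i, F i -> lat_ideal (N i)) -> lat_ideal (fun x => forall i, F i -> N i x).
Proof. exact: (@lat_filter_bigcap _ L^d). Qed.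

End Ideals.

Definition disj (T : Type) (P N : set T) := forall x, P x -> N x -> False.

Definition preim (T : Type) (f : T -> option bool) (b : bool) : set T :=
  fun x => f x = Some b.

Definition pgraph (T : Type) (f : T -> option bool) : set T * set T :=
  (preim f true, preim f false).

Definition char_pmap (T : Type) (p : set T * set T) : T -> option bool :=
  fun x => if pselect (p.1 x) then Some true
           else if pselect (p.2 x) then Some false else None.

Section PartialMaps.
Variable T : Type.
Implicit Types (f h : T -> option bool) (p : set T * set T).

Lemma pextP f h : pext f h <-> pair_sub (pgraph f) (pgraph h).
Proof.
split=> [fh|[fh1 fh0] x [] fx]; [by split=> x; apply: fh | exact: fh1 | exact: fh0].
Qed.

Lemma pgraph_char p : disj p.1 p.2 -> pgraph (char_pmap p) = p.
Proof.
case: p => P N /= PN; congr pair; apply/predeqP => x; rewrite /preim /char_pmap /=.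
  by case: pselect => Px; [|case: pselect].
case: pselect => [Px|nPx]; last by case: pselect.
by split=> // Nx; case: (PN x).
Qed.

End PartialMaps.

Section PartialHomomorphisms.
Variables (d : Order.disp_t) (L : tbLatticeType d).
Implicit Types (f h : L -> option bool) (p : set L * set L).

Definition consistent p := [/\ lat_filter p.1, lat_ideal p.2 & disj p.1 p.2].

Definition ph_closure f : set L * set L :=
  (upclosure (preim f true), downclosure (preim f false)).

Lemma filter_ideal_bigcup (F : set (set L * set L)) :
  F `<=` (fun p => lat_filter p.1 /\ lat_ideal p.2) -> F !=set0 ->
  total_on F pair_sub ->
  lat_filter (pair_bigcup F).1 /\ lat_ideal (pair_bigcup F).2.
Proof.
move=> FP F0 Ftot; split.
  apply: lat_filter_bigcup F0 (fun p Fp => (FP p Fp).1) _ => p q Fp Fq.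
  by case: (Ftot p q Fp Fq) => -[pq _]; [left|right].
apply: lat_ideal_bigcup F0 (fun p Fp => (FP p Fp).2) _ => p q Fp Fq.
by case: (Ftot p q Fp Fq) => -[_ pq]; [left|right].
Qed.

Lemma consistent_bigcup (F : set (set L * set L)) :
  F `<=` consistent -> F !=set0 -> total_on F pair_sub -> consistent (pair_bigcup F).
Proof.
move=> Fc F0 Ftot.
have [|hP hN] := filter_ideal_bigcup _ F0 Ftot; first by move=> p /Fc[].
split=> // x Px Nx; have [p Fp [px pn]] := pair_bigcup_mem Ftot Px Nx.
by case: (Fc p Fp) => _ _ PN; exact: PN px pn.
Qed.

Lemma char_pmap_ph p : consistent p -> is_ph (char_pmap p).
Proof.
move=> [[P1 PI PU] [N0 NU ND] PN].
have [g1 g0] : preim (char_pmap p) true = p.1 /\ preim (char_pmap p) false = p.2.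
  by rewrite -[X in _ = X.1 /\ _ = X.2](pgraph_char PN).
have g1P z : char_pmap p z = Some true <-> p.1 z by rewrite -g1.
have g0N z : char_pmap p z = Some false <-> p.2 z by rewrite -g0.
split; [exact/g0N | split; [exact/g1P|]].
move=> a b [] [] /= /[swap]; rewrite ?g1P ?g0N => Pb Pa; split.
- exact: PI.
- exact: PU Pa (leUl _ _).
- exact: ND Pb (leIr _ _).
- exact: PU Pa (leUl _ _).
- exact: ND Pa (leIl _ _).
- exact: PU Pb (leUr _ _).
- exact: ND Pa (leIl _ _).
- exact: NU.
Qed.

Lemma ph_closure_consistent f : is_ph f -> consistent (ph_closure f).
Proof.
move=> [f0 [f1 fI]]; split.
- apply: lat_filter_upclosure; first by exists \top.
  by move=> x y fx fy; case: (fI _ _ _ _ fx fy).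
- apply: lat_ideal_downclosure; first by exists \bot.
  by move=> x y fx fy; case: (fI _ _ _ _ fx fy).
- move=> z [x fx xz] [y fy zy].
  have [fxy _] := fI _ _ _ _ fx fy.
  by move: fxy; rewrite (meet_idPl (le_trans xz zy)) fx.
Qed.

Lemma pgraph_sub_ph_closure f : pair_sub (pgraph f) (ph_closure f).
Proof. by split=> x fx; exists x. Qed.

Lemma mph_pgraph f : is_mph f -> pgraph f = ph_closure f.
Proof.
move=> [phf maxf]; have [_ _ PN] := ph_closure_consistent phf.
apply: pair_sub_anti; first exact: pgraph_sub_ph_closure.
rewrite -[X in pair_sub X _](pgraph_char PN) -pextP.
apply: maxf; first exact/char_pmap_ph/ph_closure_consistent.
by rewrite pextP pgraph_char //; exact: pgraph_sub_ph_closure.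
Qed.

Lemma mph_consistent f : is_mph f -> consistent (pgraph f).
Proof. by move=> mf; rewrite (mph_pgraph mf); apply/ph_closure_consistent; case: mf. Qed.

Lemma mph_char_maximal p : consistent p ->
  (forall q, consistent q -> pair_sub p q -> pair_sub q p) -> is_mph (char_pmap p).
Proof.
move=> cp pmax; have [_ _ PN] := cp; split; first exact: char_pmap_ph.
move=> h phh; rewrite !pextP pgraph_char // => ph.
apply: pair_sub_trans (pgraph_sub_ph_closure h) _.
apply: pmax; first exact: ph_closure_consistent.
exact: pair_sub_trans ph (pgraph_sub_ph_closure h).
Qed.

Lemma ex_mph_extending p : consistent p -> exists k : PL L, pair_sub p (pgraph (sval k)).
Proof.
move=> cp; have [q [cq pq] qmax] := Zorn_pair cp consistent_bigcup.
have [_ _ QN] := cq.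
by exists (exist _ _ (mph_char_maximal cq qmax)); rewrite /= pgraph_char.
Qed.

End PartialHomomorphisms.

Section PLGraph.
Variables (d : Order.disp_t) (L : tbLatticeType d) (k : PL L).

Lemma PL_filter : lat_filter (preim (sval k) true).
Proof. by case: (mph_consistent (svalP k)). Qed.

Lemma PL_ideal : lat_ideal (preim (sval k) false).
Proof. by case: (mph_consistent (svalP k)). Qed.

Lemma PL_disj : disj (preim (sval k) true) (preim (sval k) false).
Proof. by case: (mph_consistent (svalP k)). Qed.

End PLGraph.

(* A literal (b, a) stands for the subbasic closed set {f | f a = b} (W_a or
   V_a), a clause for the finite union of its literals, and [cnf_holds Cl] for
   the intersection of the clauses in Cl. *)
Definition lit_in (T : Type) (p : set T * set T) (l : bool * T) : Prop :=
  (if l.1 then p.1 else p.2) l.2.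

Definition clause_meets (T : eqType) (p : set T * set T) (c : seq (bool * T)) :=
  exists2 l, l \in c & lit_in p l.

Definition cnf_holds d (L : tbLatticeType d) (Cl : set (seq (bool * L))) : set (PL L) :=
  fun k => forall c, Cl c -> clause_meets (pgraph (sval k)) c.

Section ClosedSets.
Variables (d : Order.disp_t) (L : tbLatticeType d).
Local Notation cl := (@closedL d L).
Implicit Types (A B : set (PL L)) (k : PL L).

Lemma closedL_preim a b : cl (preim (@eL d L a) b).
Proof. by move=> F _ FS _ _ _; apply: FS; exists a; case: b; [right|left]. Qed.

Lemma closedL0 : cl set0.
Proof. by move=> F _ _ F0. Qed.

Lemma closedLU A B : cl A -> cl B -> cl (setU A B).
Proof.
move=> clA clB F Fext FS F0 FU FI.
exact: FU (clA F Fext FS F0 FU FI) (clB F Fext FS F0 FU FI).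
Qed.

Lemma closedL_bigcap (G : set (set (PL L))) :
  (forall A, G A -> cl A) -> cl (fun k => forall A, G A -> A k).
Proof.
move=> clG F Fext FS F0 FU FI.
exact: FI G (fun A GA => clG A GA F Fext FS F0 FU FI).
Qed.

Lemma closedLI A B : cl A -> cl B -> cl (setI A B).
Proof.
move=> clA clB; have -> : setI A B = fun k => forall C, (C = A \/ C = B) -> C k.
  by apply/predeqP => k; split=> [[Ak Bk] C [->|->]|ABk]; [| |split; apply: ABk; auto].
by apply: closedL_bigcap => C [->|->].
Qed.

Lemma closedL_guard (Q : Prop) A : cl A -> cl (fun k => Q /\ A k).
Proof.
move=> clA; case: (pselect Q) => [q|nq].
  by have -> : (fun k => Q /\ A k) = A by apply/predeqP => k; split=> [[]|].
have -> : (fun k => Q /\ A k) = set0 by apply/predeqP => k; split=> [[]|].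
exact: closedL0.
Qed.

Lemma PL_pext_eq k k' : pext (sval k) (sval k') -> k' = k.
Proof.
case: k k' => [f [phf maxf]] [h [phh ?]] /= fh; apply: eq_exist.
have hf := maxf h phh fh; apply/funext => t.
case ft: (f t) => [x|]; first exact: fh.
by case ht: (h t) => [y|] //; rewrite (hf _ _ ht) in ft.
Qed.

Lemma closedL_singleton k : cl [set k].
Proof.
have -> : [set k] = fun k' => forall A,
    (exists2 l, lit_in (pgraph (sval k)) l & A = preim (@eL d L l.2) l.1) -> A k'.
  apply/predeqP => k'; split=> [-> A [[[] a] /= ka ->] // | kk'].
  apply: PL_pext_eq => a [] ka.
  - by apply: (kk' (preim (@eL d L a) true)); exists (true, a).
  - by apply: (kk' (preim (@eL d L a) false)); exists (false, a).
by apply: closedL_bigcap => A [l _ ->]; exact: closedL_preim.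
Qed.

Lemma clause_meets1 (T : eqType) (p : set T * set T) l :
  clause_meets p [:: l] <-> lit_in p l.
Proof. by split=> [[l']|]; [rewrite inE => /eqP -> | exists l; rewrite ?mem_head]. Qed.

Lemma clause_meets_cat (T : eqType) (p : set T * set T) c1 c2 :
  clause_meets p (c1 ++ c2) <-> clause_meets p c1 \/ clause_meets p c2.
Proof.
split=> [[l] | [[l lc pl] | [l lc pl]]]; last 2 first.
- by exists l; rewrite ?mem_cat ?lc.
- by exists l; rewrite ?mem_cat ?lc ?orbT.
by rewrite mem_cat => /orP[lc|lc] pl; [left|right]; exists l.
Qed.

Lemma closedL_cnf A : cl A -> exists Cl, A = cnf_holds Cl.
Proof.
move=> clA; apply: (clA (fun A => exists Cl, A = cnf_holds Cl))
  => [A' B' AB' [Cl AE] | _ [a [->|->]] | | A1 B1 [C1 ->] [C2 ->] | G GCl].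
- by exists Cl; rewrite -AE; apply/predeqP => k; split=> /AB'.
- exists [set [:: (false, a)]]; apply/predeqP => k; split=> [ka c -> | ka].
    by exists (false, a); rewrite ?mem_head.
  by have [l] := ka _ erefl; rewrite inE => /eqP ->.
- exists [set [:: (true, a)]]; apply/predeqP => k; split=> [ka c -> | ka].
    by exists (true, a); rewrite ?mem_head.
  by have [l] := ka _ erefl; rewrite inE => /eqP ->.
- by exists [set [::]]; apply/predeqP => k; split=> // /(_ _ erefl) [].
- exists (fun c => exists2 c1, C1 c1 & exists2 c2, C2 c2 & c = c1 ++ c2).
  apply/predeqP => k; split=> [C12k _ [c1 Cc1 [c2 Cc2 ->]] | Ck].
    by apply/clause_meets_cat; case: C12k => Ck; [left|right]; apply: Ck.
  case: (pselect (cnf_holds C1 k)) => [|/existsNP[c1 /not_implyP[Cc1 nc1]]].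
    by left.
  right=> c2 Cc2; have := Ck _ (ex_intro2 _ _ c1 Cc1 (ex_intro2 _ _ c2 Cc2 erefl)).
  by case/clause_meets_cat => // /nc1.
- exists (fun c => exists2 B, G B & exists2 Cl, B = cnf_holds Cl & Cl c).
  apply/predeqP => k; split=> [Gk c [B GB [Cl BE Clc]] | Ck B GB].
    by move: (Gk B GB); rewrite BE; apply.
  by have [Cl BE] := GCl B GB; rewrite BE => c Clc; apply: Ck; exists B => //; exists Cl.
Qed.

End ClosedSets.



Section Compactness.
Variables (d : Order.disp_t) (L : tbLatticeType d) (Cl : set (seq (bool * L))).
Implicit Types (p : set L * set L) (k : PL L).

(* The finite intersection property of the closed sets K = cnf_holds Cl, W_s
   (s in p.1) and V_t (t in p.2); as p.1 is meet-closed and p.2 join-closed,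
   one s and one t suffice. *)
Definition fip p := forall s t, p.1 s -> p.2 t ->
  exists k, [/\ cnf_holds Cl k, sval k s = Some true & sval k t = Some false].

Definition fip_pair p := [/\ lat_filter p.1, lat_ideal p.2 & fip p].

Lemma fip_pair_bigcup (F : set (set L * set L)) :
  F `<=` fip_pair -> F !=set0 -> total_on F pair_sub -> fip_pair (pair_bigcup F).
Proof.
move=> Ff F0 Ftot.
have [|hP hN] := filter_ideal_bigcup _ F0 Ftot; first by move=> p /Ff[].
split=> // s t Ps Nt; have [p Fp [ps pt]] := pair_bigcup_mem Ftot Ps Nt.
by case: (Ff p Fp) => _ _; apply.
Qed.

Section MaximalFip.
Variables (P N : set L).
Hypotheses (hP : lat_filter P) (hN : lat_ideal N) (fipPN : fip (P, N)).
Hypothesis maxPN : forall q, fip_pair q -> pair_sub (P, N) q -> pair_sub q (P, N).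

Definition refutable (c : seq (bool * L)) := exists s t, [/\ P s, N t &
  forall k, cnf_holds Cl k -> sval k s = Some true -> sval k t = Some false ->
    ~ clause_meets (pgraph (sval k)) c].

Lemma refutable_lit l : ~ lit_in (P, N) l -> refutable [:: l].
Proof.
move=> nl; apply: contrapT => nref; apply: nl.
have witness s t : P s -> N t -> exists k,
    [/\ cnf_holds Cl k, sval k s = Some true, sval k t = Some false
       & lit_in (pgraph (sval k)) l].
  move=> Ps Nt; apply: contrapT => nk; apply: nref; exists s, t; split=> // k Kk ks kt.
  by move=> /clause_meets1 kl; apply: nk; exists k.
case: l {nref} witness => [[] x] /= witness.
- have [adjF Padj adjx] := lat_filter_adjoin x hP.
  have fipadj : fip (filter_adjoin P x, N).
    move=> s t [z [p Pp ->] pxs] Nt; have [k [Kk kp kt kx]] := witness p t Pp Nt.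
    exists k; split=> //; have [_ kI kU] := PL_filter k.
    exact: kU (kI _ _ kp kx) pxs.
  have [/(_ x adjx) //] :=
    @maxPN (filter_adjoin P x, N) (And3 adjF hN fipadj) (conj Padj (@subset_refl _ N)).
- have [adjI Nadj adjx] := lat_ideal_adjoin x hN.
  have fipadj : fip (P, ideal_adjoin N x).
    move=> s t Ps [z [n Nn ->] txn]; have [k [Kk ks kn kx]] := witness s n Ps Nn.
    exists k; split=> //; have [_ kU kD] := PL_ideal k.
    exact: kD (kU _ _ kn kx) txn.
  have [_ /(_ x adjx) //] :=
    @maxPN (P, ideal_adjoin N x) (And3 hP adjI fipadj) (conj (@subset_refl _ P) Nadj).
Qed.

Lemma refutable_cons l c : refutable [:: l] -> refutable c -> refutable (l :: c).
Proof.
move=> [s1 [t1 [Ps1 Nt1 r1]]] [s2 [t2 [Ps2 Nt2 r2]]].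
have [_ PI _] := hP; have [_ NU _] := hN.
exists (s1 `&` s2), (t1 `|` t2); split; [exact: PI | exact: NU |].
move=> k Kk ks kt; have [_ _ kU] := PL_filter k; have [_ _ kD] := PL_ideal k.
rewrite -cat1s => /clause_meets_cat[].
- by apply: r1 => //; [exact: kU ks (leIl _ _) | exact: kD kt (leUl _ _)].
- by apply: r2 => //; [exact: kU ks (leIr _ _) | exact: kD kt (leUr _ _)].
Qed.

Lemma refutable_clause c : ~ clause_meets (P, N) c -> refutable c.
Proof.
elim: c => [|l c IHc] nc.
  by have [[P1 _ _] [N0 _ _]] := (hP, hN); exists \top, \bot; split=> // k _ _ _ [].
apply: refutable_cons.
  by apply: refutable_lit => nl; apply: nc; exists l; rewrite ?mem_head.
by apply: IHc => -[l' l'c l'in]; apply: nc; exists l'; rewrite // inE l'c orbT.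
Qed.

Lemma fip_disj : disj P N.
Proof. by move=> x Px Nx; have [k [_ kx1 kx0]] := fipPN Px Nx; rewrite kx1 in kx0. Qed.

Lemma maximal_fip_cnf k : pair_sub (P, N) (pgraph (sval k)) -> cnf_holds Cl k.
Proof.
move=> [Pk Nk] c Clc.
have [l lc lPN] : clause_meets (P, N) c.
  apply: contrapT => nc; have [s [t [Ps Nt rc]]] := refutable_clause nc.
  have [k' [Kk' k's k't]] := fipPN Ps Nt; exact: rc k' Kk' k's k't (Kk' c Clc).
by exists l => //; case: l lPN {lc} => [[] x] /=; [apply: Pk | apply: Nk].
Qed.

End MaximalFip.

Lemma cnf_compact S T : lat_filter S -> lat_ideal T -> fip (S, T) ->
  exists2 k, cnf_holds Cl k & pair_sub (S, T) (pgraph (sval k)).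
Proof.
move=> hS hT fipST.
have [[P N] [[hP hN fipPN] STPN] maxPN] :=
  @Zorn_pair _ fip_pair (S, T) (And3 hS hT fipST) fip_pair_bigcup.
have [k PNk] := ex_mph_extending (And3 hP hN (fip_disj fipPN)).
exists k; first exact: (maximal_fip_cnf hP hN fipPN maxPN PNk).
exact: pair_sub_trans STPN PNk.
Qed.

End Compactness.

Section Representation.
Variables (d : Order.disp_t) (L : tbLatticeType d).
Local Notation X := (PL L).
Local Notation cl := (@closedL d L).
Local Notation E := (@Erel d L).
Local Notation pm := (is_pm E cl).
Local Notation mpm := (is_mpm E cl).
Implicit Types (f g h k : X) (phi psi : X -> option bool) (a b : L).

Lemma ErelP f g : E f g <-> disj (preim (sval f) true) (preim (sval g) false).
Proof.
split=> [fg a fa ga | fg a [] [] fa ga //]; first by have := fg a _ _ fa ga.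
by case: (fg a fa ga).
Qed.

Lemma Erel_refl f : E f f.
Proof. exact/ErelP/PL_disj. Qed.

Lemma Erel_subl f g h : preim (sval f) true `<=` preim (sval g) true -> E g h -> E f h.
Proof. by move=> fg /ErelP gh; apply/ErelP => a /fg; apply: gh. Qed.

Lemma Erel_subr f g h : preim (sval h) false `<=` preim (sval g) false -> E f g -> E f h.
Proof. by move=> hg /ErelP fg; apply/ErelP => a fa /hg; apply: fg. Qed.

Lemma is_pmP phi : pm phi <->
  [/\ cl (preim phi true), cl (preim phi false)
    & forall x y, E x y -> phi x = Some true -> phi y = Some false -> False].
Proof.
split=> [[cldom [mono cont]] | [cl1 cl0 mono]].
  have clb (v : bool) : cl (preim phi v).
    have [K [clK domK]] := cont (fun c => c = ~~ v).
    have -> : preim phi v = setI (fun x => phi x <> None) K.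
      apply/predeqP => x; rewrite /preim; split=> [phiv | [dx Kx]].
        have dx : phi x <> None by rewrite phiv.
        split=> //; apply: contrapT => nK; have [c [pc cv]] := (domK x dx).2 nK.
        by move: pc; rewrite phiv cv; case: (v).
      case phix: (phi x) => [c|]; last by rewrite phix in dx.
      congr Some; apply: contrapT => cv; apply: (domK x dx).1 Kx.
      by exists c; split=> //; case: (v) (c) cv => -[].
    exact: closedLI.
  split=> [||x y Exy px py]; [exact: clb | exact: clb |].
  by have := mono _ _ _ _ Exy px py.
split.
  have -> : (fun x => phi x <> None) = setU (preim phi true) (preim phi false).
    apply/predeqP => x; split=> [|[] ->] //.
    by case phix: (phi x) => [[]|] // _; [left|right].
  exact: closedLU.
split=> [x y [] [] Exy px py // | U]; first by case: (mono _ _ Exy px py).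
exists (setU (fun x => ~ U true /\ phi x = Some true)
             (fun x => ~ U false /\ phi x = Some false)).
split; first by apply: closedLU; apply: closedL_guard.
move=> x; rewrite /setU /=; case: (phi x) => [c|] // _; split.
  by move=> [b [[<-] Uc]]; case: c Uc => Uc [[nU E]|[nU E]] //; apply: nU.
move=> nK; exists c; split=> //; apply: contrapT => nUc; apply: nK.
by case: c nUc => nUc; [left|right].
Qed.

Lemma PL_below f a : sval f a <> Some true ->
  exists h, preim (sval f) true `<=` preim (sval h) true /\ sval h a = Some false.
Proof.
move=> fa; have hf := PL_filter f.
have [|h [fh ah]] := @ex_mph_extending _ _ (preim (sval f) true, [set y | y <= a]).
  split=> //; first exact: lat_ideal_down.
  by move=> y fy ya; apply: fa; case: hf => _ _ fU; exact: fU fy ya.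
by exists h; split=> //; exact: ah _ (lexx a).
Qed.

Lemma PL_above g a : sval g a <> Some false ->
  exists h, preim (sval g) false `<=` preim (sval h) false /\ sval h a = Some true.
Proof.
move=> ga; have hg := PL_ideal g.
have [|h [ah gh]] := @ex_mph_extending _ _ ([set y | a <= y], preim (sval g) false).
  split=> //; first exact: lat_filter_up.
  by move=> y ay gy; apply: ga; case: hg => _ _ gD; exact: gD gy ay.
by exists h; split=> //; exact: ah _ (lexx a).
Qed.

Lemma PL_separate a b : ~ a <= b ->
  exists k, sval k a = Some true /\ sval k b = Some false.
Proof.
move=> nab.
have [|k [ak bk]] := @ex_mph_extending _ _ ([set y | a <= y], [set y | y <= b]).
  split; [exact: lat_filter_up | exact: lat_ideal_down |].
  by move=> y ay yb; apply: nab; exact: le_trans yb.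
by exists k; split; [exact: ak _ (lexx a) | exact: bk _ (lexx b)].
Qed.

Lemma eL_pm a : pm (eL a).
Proof.
apply/is_pmP; split; [exact: closedL_preim | exact: closedL_preim |].
by move=> f g /ErelP fg; apply: fg.
Qed.

Lemma eL_mpm a : mpm (eL a).
Proof.
split=> [|psi /is_pmP[_ _ mono] ext f v psif]; first exact: eL_pm.
case fa: (sval f a) => [u|]; first by move: (ext _ _ fa); rewrite psif => -[->].
case: v psif => psif.
  have [|h [fh ha]] := PL_below (f := f) (a := a); first by rewrite fa.
  by case: (mono f h (Erel_subl fh (@Erel_refl h)) psif (ext _ _ ha)).
have [|h [fh ha]] := PL_above (g := f) (a := a); first by rewrite fa.
by case: (mono h f (Erel_subr fh (@Erel_refl h)) (ext _ _ ha) psif).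
Qed.

Lemma eL_leP a b : mpm_le (eL a) (eL b) <-> a <= b.
Proof.
split=> [ab | ab f fa].
  apply: contrapT => nab; have [k [ka kb]] := PL_separate nab.
  by move: (ab k ka); rewrite /eL kb.
by have [_ _ kU] := PL_filter f; exact: kU fa ab.
Qed.

Lemma eL_inj a b : eL a =1 eL b -> a = b.
Proof.
move=> ab; apply/le_anti/andP; split; apply/eL_leP => f; by rewrite /mpm_le ab.
Qed.

Lemma mpm_add_point phi k (v : bool) : mpm phi ->
  (forall x, phi x = Some (~~ v) -> ~ (if v then E k x else E x k)) -> phi k = Some v.
Proof.
move=> [/is_pmP[cl1 cl0 mono] maxphi] nedge.
case phik: (phi k) => [u|].
  congr Some; apply: contrapT => uv; apply: (nedge k).
    by rewrite phik; case: (u) (v) uv => -[].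
  by case: (v); exact: Erel_refl.
pose psi x := if pselect (x = k) then Some v else phi x.
have psiE (u : bool) : preim psi u = setU (fun x => v = u /\ [set k] x) (preim phi u).
  apply/predeqP => x; rewrite /preim /psi /setU /=; case: pselect => xk.
    by subst x; rewrite phik; split=> [[->]|[[-> _]|]]; [left|..].
  by split=> [|[[_ /xk]|]]; [right|..].
have pmpsi : pm psi.
  have clpsi (u : bool) : cl (preim psi u).
    rewrite psiE; apply: closedLU; first exact: closedL_guard (closedL_singleton k).
    by case: u.
  apply/is_pmP; split; [exact: clpsi | exact: clpsi |].
  move=> x y Exy; rewrite /psi.
  case: (pselect (x = k)) => xk; case: (pselect (y = k)) => yk; subst.
  - by move=> -> [].
  - by move=> [vT] phiy; subst v; exact: nedge y phiy Exy.
  - by move=> phix [vF]; subst v; exact: nedge x phix Exy.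
  - exact: mono Exy.
have ext : pext phi psi.
  by move=> x u phix; rewrite /psi; case: pselect => // xk; rewrite xk phik in phix.
rewrite -phik; apply: (maxphi psi pmpsi ext k v); rewrite /psi; by case: pselect.
Qed.

Section Surjectivity.
Variable phi : X -> option bool.
Hypothesis mphi : mpm phi.

Definition mpm_filter : set L :=
  fun x => forall f, phi f = Some true -> sval f x = Some true.
Definition mpm_ideal : set L :=
  fun x => forall g, phi g = Some false -> sval g x = Some false.

Lemma mpm_no_edge f g : phi f = Some true -> phi g = Some false -> ~ E f g.
Proof. by case: mphi => /is_pmP[_ _ mono] _ fT gF Efg; exact: mono Efg fT gF. Qed.

Lemma mpm_true_up f k : phi f = Some true ->
  preim (sval f) true `<=` preim (sval k) true -> phi k = Some true.
Proof.
move=> fT fk; apply: mpm_add_point => // g gF Ekg.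
exact: mpm_no_edge fT gF (Erel_subl fk Ekg).
Qed.

Lemma mpm_false_down g k : phi g = Some false ->
  preim (sval g) false `<=` preim (sval k) false -> phi k = Some false.
Proof.
move=> gF gk; apply: mpm_add_point => // f fT Efk.
exact: mpm_no_edge fT gF (Erel_subr gk Efk).
Qed.

Lemma mpm_false_separated g : phi g = Some false ->
  exists2 x, mpm_filter x & sval g x = Some false.
Proof.
move=> gF; apply: contrapT => nx.
have [cl1 _ _] := (is_pmP phi).1 mphi.1.
have [Cl ClE] := closedL_cnf cl1.
have [|k Kk [_ gk]] :=
  cnf_compact (Cl := Cl) (lat_filter_up \top) (PL_ideal g).
  move=> s t /= top_s gt.
  have [f fT ft] : exists2 f, phi f = Some true & sval f t <> Some true.
    apply: contrapT => nf; apply: nx; exists t => // f fT.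
    by apply: contrapT => ft; apply: nf; exists f.
  have [h [fh ht]] := PL_below ft.
  exists h; split=> //; first by rewrite -ClE; exact: mpm_true_up fT fh.
  by have [h1 _ hU] := PL_filter h; exact: hU h1 top_s.
have kT : phi k = Some true by move: Kk; rewrite -ClE.
exact: mpm_no_edge kT gF (Erel_subr gk (@Erel_refl k)).
Qed.

Lemma mpm_true_separated f : phi f = Some true ->
  exists2 x, mpm_ideal x & sval f x = Some true.
Proof.
move=> fT; apply: contrapT => nx.
have [_ cl0 _] := (is_pmP phi).1 mphi.1.
have [Cl ClE] := closedL_cnf cl0.
have [|k Kk [fk _]] :=
  cnf_compact (Cl := Cl) (PL_filter f) (lat_ideal_down \bot).
  move=> s t /= fs t_bot.
  have [g gF gs] : exists2 g, phi g = Some false & sval g s <> Some false.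
    apply: contrapT => ng; apply: nx; exists s => // g gF.
    by apply: contrapT => gs; apply: ng; exists g.
  have [h [gh hs]] := PL_above gs.
  exists h; split=> //; first by rewrite -ClE; exact: mpm_false_down gF gh.
  by have [h0 _ hD] := PL_ideal h; exact: hD h0 t_bot.
have kF : phi k = Some false by move: Kk; rewrite -ClE.
exact: mpm_no_edge fT kF (Erel_subl fk (@Erel_refl k)).
Qed.

Lemma mpm_filter_meets_ideal : exists2 a, mpm_filter a & mpm_ideal a.
Proof.
apply: contrapT => nmeet.
have [|h [Fh Ih]] := @ex_mph_extending _ _ (mpm_filter, mpm_ideal).
  split.
  - apply: (@lat_filter_bigcap _ _ _ (preim phi true) (fun f => preim (sval f) true)).
    by move=> f _; exact: PL_filter.
  - apply: (@lat_ideal_bigcap _ _ _ (preim phi false) (fun g => preim (sval g) false)).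
    by move=> g _; exact: PL_ideal.
  by move=> x Fx Ix; apply: nmeet; exists x.
have hT : phi h = Some true.
  apply: mpm_add_point => // g gF /ErelP Ehg.
  by have [y /Fh hy gy] := mpm_false_separated gF; exact: Ehg y hy gy.
have [y /Ih hy0 hy1] := mpm_true_separated hT.
by move: hy0; rewrite /= /preim hy1.
Qed.

Lemma mpm_eL : exists a, phi = eL a.
Proof.
have [a Fa Ia] := mpm_filter_meets_ideal.
have ext : pext phi (eL a) by move=> f [] phif; [exact: Fa | exact: Ia].
exists a; apply/funext => f.
case phif: (phi f) => [u|]; first by rewrite (ext _ _ phif).
by case ef: (eL a f) => [u|] //; rewrite (mphi.2 _ (eL_pm a) ext _ _ ef) in phif.
Qed.

End Surjectivity.

Lemma eL_glb a b : is_glb mpm (eL a) (eL b) (eL (a `&` b)).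
Proof.
split; first exact: eL_mpm.
split; first exact/eL_leP/leIl.
split; first exact/eL_leP/leIr.
by move=> th /mpm_eL[c ->] /eL_leP ca /eL_leP cb; apply/eL_leP; rewrite lexI ca cb.
Qed.

Lemma eL_lub a b : is_lub mpm (eL a) (eL b) (eL (a `|` b)).
Proof.
split; first exact: eL_mpm.
split; first exact/eL_leP/leUl.
split; first exact/eL_leP/leUr.
by move=> th /mpm_eL[c ->] /eL_leP ac /eL_leP bc; apply/eL_leP; rewrite leUx ac bc.
Qed.

Lemma eL0_le phi : mpm_le (eL \bot) phi.
Proof. by move=> f; have [[f0 _] _] := svalP f; rewrite /eL f0. Qed.

Lemma le_eL1 phi : mpm_le phi (eL \top).
Proof. by move=> f _; have [[_ [f1 _]] _] := svalP f. Qed.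

Lemma eL_ocompl (o : orthocompl L) a : eL (ocompl o a) =1 pneg (gL o) (eL a).
Proof.
by move=> f; rewrite /pneg /eL /= /gmap; case: (sval f (ocompl o a)) => [[]|].
Qed.

End Representation.

Theorem theorem5p3 (d : Order.disp_t) (L : tbLatticeType d) (o : orthocompl L) :
  let MPM := is_mpm (@Erel d L) (@closedL d L) in
  (forall a : L, MPM (eL a)) /\
  (forall a b : L, (forall f, eL a f = eL b f) -> a = b) /\
  (forall phi, MPM phi -> exists a : L, forall f, phi f = eL a f) /\
  (forall a b : L, is_glb MPM (eL a) (eL b) (eL (a `&` b))) /\
  (forall a b : L, is_lub MPM (eL a) (eL b) (eL (a `|` b))) /\
  (forall phi, MPM phi -> mpm_le (eL \bot) phi /\ mpm_le phi (eL \top)) /\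
  (forall (a : L) f, eL (ocompl o a) f = pneg (gL o) (eL a) f).
Proof.
move=> MPM; split; first exact: eL_mpm.
split; first exact: eL_inj.
split; first by move=> phi /mpm_eL[a ->]; exists a.
split; first exact: eL_glb.
split; first exact: eL_lub.
split; first by move=> phi _; split; [exact: eL0_le | exact: le_eL1].
exact: eL_ocompl.
Qed.
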